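(* There exist absolute constants $0<c\le C$ such that for all integers $1\le m\le n$, $$n!\left(\frac{c}{m}\max\Big\{1,\log\frac nm\Big\}\right)^m\le|s(n+1,m+1)|\le n!\left(\frac{C}{m}\max\Big\{1,\log\frac nm\Big\}\right)^m.$$
   Context: $s(a,b)$ denote the Stirling numbers of the first kind, defined by $x(x-1)\cdots(x-a+1)=\sum_{b=1}^{a}s(a,b)x^b$. Logarithms are natural. *)

From mathcomp Require Import all_boot all_order all_algebra.
From Stdlib Require Import Reals.
Set Implicit Arguments. Unset Strict Implicit. Unset Printing Implicit Defensive.
Import GRing.Theory.
Local Open Scope ring_scope.

Definition falling_poly (a : nat) : {poly int} :=
  \prod_(i < a) ('X - (i%:Z)%:P).

Definition stirling1 (a b : nat) : int := (falling_poly a)`_b.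

Definition abs_stirling1R (a b : nat) : R := INR (absz (stirling1 a b)).

(* Write e_m(n) for the elementary symmetric polynomial e_m(1, 1/2, ..., 1/n).
   Comparing the recurrences gives |s(n+1, m+1)| = n! e_m(n), so it suffices to
   bound e_m(n).
   Upper bound: for t >= 0, e_m(n) t^m <= prod_(k <= n) (1 + t/k)
   <= prod_(k <= m) (1 + t/k) * exp (t (H_n - H_m)) <= (2e)^m * exp (t log(n/m));
   the choice t = m / max(1, log(n/m)) makes the exponential at most e^m.
   Lower bound: e_(j+1)(b) >= e_j(a) (H_b - H_a) for a <= b.  If log(n/m) >= 2,
   the points a_0 = m, a_(j+1) ~ a_j (n/m)^(1/m) cut [m, n] into m blocks whose
   harmonic sums are all >= log(n/m) / (2m); otherwise e_m(n) >= e_m(m) = 1/m!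
   >= m^-m. *)

From mathcomp Require Import all_boot all_order all_algebra.
From Stdlib Require Import Reals Lra Lia.
From Coquelicot Require Import Rcomplements.
From mathcomp Require Import zify.

Fixpoint ustirling1 (a b : nat) : nat :=
  match a with
  | 0 => (b == 0)%nat
  | a'.+1 => ((if b is b'.+1 then ustirling1 a' b' else 0) + a' * ustirling1 a' b)%nat
  end.

Lemma ustirling1S a b :
  ustirling1 a.+1 b = ((if b is b'.+1 then ustirling1 a b' else 0) + a * ustirling1 a b)%nat.
Proof. by []. Qed.

Section SignedUnsigned.
Import GRing.Theory.
Local Open Scope ring_scope.

Lemma stirling1_recr a b :
  stirling1 a.+1 b = (if b is b'.+1 then stirling1 a b' else 0) - stirling1 a b * a%:Z.
Proof.
rewrite /stirling1 /falling_poly big_ord_recr /= -/(falling_poly a).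
by rewrite mulrBr coefB coefMX coefMC; case: b.
Qed.

Lemma stirling1_sign a b : stirling1 a b = (-1) ^+ (a + b) * (ustirling1 a b)%:Z.
Proof.
elim: a b => [|a IH] b.
  by rewrite /stirling1 /falling_poly big_ord0 coef1; case: b => [|b]; rewrite ?mulr1 ?mulr0.
rewrite stirling1_recr /= PoszD PoszM.
case: b => [|b]; rewrite !IH ?addn0 ?addnS ?addSn !exprS !mulN1r.
  by rewrite !add0r !mulNr -mulrA [_ * a%:Z]mulrC.
by rewrite opprK !mulNr opprK mulrDr -mulrA [_ * a%:Z]mulrC.
Qed.

End SignedUnsigned.

Lemma abs_stirling1R_ustirling1 a b : abs_stirling1R a b = INR (ustirling1 a b).
Proof. by rewrite /abs_stirling1R stirling1_sign abszMsign. Qed.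

Open Scope R_scope.

Lemma INR_gt0 {n : nat} : (0 < n)%nat -> 0 < INR n.
Proof. by move=> n_gt0; apply/lt_0_INR; lia. Qed.

Lemma INR_succ_gt0 n : 0 < INR n.+1.
Proof. exact: INR_gt0. Qed.

Lemma INR_fact_gt0 n : 0 < INR n`!.
Proof. exact/lt_0_INR/ltP/fact_gt0. Qed.

Lemma exp_le_exp x y : x <= y -> exp x <= exp y.
Proof. by case=> [lt_xy | ->]; [left; apply: exp_increasing | right]. Qed.

Lemma exp_INR_mul k x : exp (INR k * x) = exp x ^ k.
Proof.
elim: k => [|k IH]; first by rewrite INR_0 Rmult_0_l exp_0 pow_O.
by rewrite S_INR Rmult_plus_distr_r Rmult_1_l exp_plus IH Rmult_comm tech_pow_Rmult.
Qed.

Lemma ln_le_sub1 x : 0 < x -> ln x <= x - 1.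
Proof.
move=> x_gt0; rewrite -[x - 1]ln_exp; apply: ln_le => //.
by have := exp_ineq1_le (x - 1); lra.
Qed.

Lemma ln_succ_sub_le k : (0 < k)%nat -> ln (INR k.+1) - ln (INR k) <= / INR k.
Proof.
move=> k_gt0; have k_pos := INR_gt0 k_gt0.
have k1_pos := INR_succ_gt0 k.
have := ln_le_sub1 _ (Rdiv_lt_0_compat _ _ k1_pos k_pos); rewrite ln_div //.
have -> : INR k.+1 / INR k - 1 = / INR k by rewrite S_INR; field; lra.
lra.
Qed.

Lemma inv_succ_le_ln_succ_sub k : (0 < k)%nat -> / INR k.+1 <= ln (INR k.+1) - ln (INR k).
Proof.
move=> k_gt0; have k_pos := INR_gt0 k_gt0.
have k1_pos := INR_succ_gt0 k.
have := ln_le_sub1 _ (Rdiv_lt_0_compat _ _ k_pos k1_pos); rewrite ln_div //.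
have -> : INR k / INR k.+1 - 1 = - / INR k.+1 by rewrite S_INR; field; lra.
lra.
Qed.

Fixpoint harmonic (n : nat) : R := if n is k.+1 then harmonic k + / INR n else 0.

Lemma harmonicS n : harmonic n.+1 = harmonic n + / INR n.+1.
Proof. by []. Qed.

Lemma harmonic_sub_le_ln m n : (0 < m)%nat -> (m <= n)%nat ->
  harmonic n - harmonic m <= ln (INR n / INR m).
Proof.
move=> m_gt0 le_mn.
rewrite ln_div; [|exact/INR_gt0/(leq_trans m_gt0 le_mn)|exact: INR_gt0].
rewrite -(subnKC le_mn); elim: (n - m)%nat => [|d IH]; first by rewrite addn0; lra.
by rewrite addnS harmonicS; have := inv_succ_le_ln_succ_sub (m + d) ltac:(lia); lra.
Qed.

Lemma ln_le_harmonic_sub a b : (a <= b)%nat ->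
  ln (INR b.+1 / INR a.+1) <= harmonic b - harmonic a.
Proof.
move=> le_ab; rewrite ln_div; try exact: INR_succ_gt0.
rewrite -(subnKC le_ab); elim: (b - a)%nat => [|d IH].
  by rewrite addn0; lra.
rewrite addnS harmonicS.
have := ln_succ_sub_le (a + d).+1 ltac:(lia); lra.
Qed.

(* [esym_inv n m] is e_m(1, 1/2, ..., 1/n). *)
Fixpoint esym_inv (n m : nat) : R :=
  match n, m with
  | 0, 0 => 1
  | 0, _.+1 => 0
  | n'.+1, 0 => 1
  | n'.+1, m'.+1 => esym_inv n' m + esym_inv n' m' / INR n
  end.

Lemma esym_invSS n m : esym_inv n.+1 m.+1 = esym_inv n m.+1 + esym_inv n m / INR n.+1.
Proof. by []. Qed.

Lemma esym_inv_n0 n : esym_inv n 0 = 1.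
Proof. by case: n. Qed.

Lemma esym_inv_ge0 n m : 0 <= esym_inv n m.
Proof.
elim: n m => [|n IH] [|m]; rewrite ?esym_inv_n0; try lra; first exact: Rle_refl.
rewrite esym_invSS; have := Rdiv_le_0_compat _ _ (IH m) (INR_succ_gt0 n).
by have := IH m.+1; lra.
Qed.

Lemma esym_inv_eq0 n m : (n < m)%nat -> esym_inv n m = 0.
Proof.
elim: n m => [|n IH] [|m] //= lt_nm.
by rewrite !IH ?(ltnW lt_nm) // /Rdiv Rmult_0_l Rplus_0_l.
Qed.

Lemma esym_inv_homo m n n' : (n <= n')%nat -> esym_inv n m <= esym_inv n' m.
Proof.
move=> le_nn'; rewrite -(subnKC le_nn'); elim: (n' - n)%nat => [|d IH].
  by rewrite addn0; lra.
apply: (Rle_trans _ _ _ IH); rewrite addnS; case: m {IH} => [|m].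
  by rewrite !esym_inv_n0; lra.
rewrite esym_invSS.
by have := Rdiv_le_0_compat _ _ (esym_inv_ge0 (n + d) m) (INR_succ_gt0 (n + d)); lra.
Qed.

Lemma esym_inv_diag n : esym_inv n n * INR n`! = 1.
Proof.
elim: n => [|n IH]; first by rewrite /= Rmult_1_l.
rewrite esym_invSS esym_inv_eq0 // factS mult_INR -IH.
by field; apply: not_0_INR.
Qed.

Lemma INR_fact_le_pow n : INR n`! <= INR n ^ n.
Proof.
elim: n => [|n IH]; first by rewrite /=; lra.
rewrite factS mult_INR -tech_pow_Rmult; apply: Rmult_le_compat_l; first exact: pos_INR.
by apply: (Rle_trans _ _ _ IH); apply: pow_incr; rewrite S_INR; have := pos_INR n; lra.
Qed.

Lemma inv_pow_le_esym_inv_diag n : (0 < n)%nat -> (/ INR n) ^ n <= esym_inv n n.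
Proof.
move=> n_gt0; rewrite pow_inv.
have fact_pos := INR_fact_gt0 n.
have -> : esym_inv n n = / INR n`!.
  apply: (Rmult_eq_reg_r (INR n`!)); last lra.
  by rewrite esym_inv_diag Rinv_l //; lra.
by apply: Rinv_le_contravar => //; apply: INR_fact_le_pow.
Qed.

Lemma ustirling1_n0 a : ustirling1 a.+1 0 = 0%nat.
Proof. by elim: a => // a IH; rewrite ustirling1S IH muln0. Qed.

Lemma ustirling1_esym_inv n m : INR (ustirling1 n.+1 m.+1) = INR n`! * esym_inv n m.
Proof.
elim: n m => [|n IH] [|m]; try by rewrite /=; lra.
  by rewrite ustirling1S ustirling1_n0 add0n factS !mult_INR IH !esym_inv_n0; ring.
have n1_pos := INR_succ_gt0 n.
rewrite ustirling1S factS plus_INR !mult_INR !IH esym_invSS.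
by field; lra.
Qed.

(* The generating polynomial sum_m esym_inv n m t^m = prod_(k <= n) (1 + t/k). *)
Fixpoint esym_inv_gf (t : R) (n : nat) : R :=
  if n is k.+1 then esym_inv_gf t k * (1 + t / INR n) else 1.

Lemma esym_inv_gfS t n : esym_inv_gf t n.+1 = esym_inv_gf t n * (1 + t / INR n.+1).
Proof. by []. Qed.

Lemma esym_inv_gf_ge1 t n : 0 <= t -> 1 <= esym_inv_gf t n.
Proof.
move=> t_ge0; elim: n => [|n IH]; first exact: Rle_refl.
by rewrite esym_inv_gfS; have := Rdiv_le_0_compat _ _ t_ge0 (INR_succ_gt0 n); nra.
Qed.

Lemma esym_inv_pow_le_gf t n m : 0 <= t -> esym_inv n m * t ^ m <= esym_inv_gf t n.
Proof.
move=> t_ge0; elim: n m => [|n IH] [|m].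
- by rewrite /=; lra.
- by rewrite /= Rmult_0_l; lra.
- by rewrite esym_inv_n0 pow_O Rmult_1_l; apply: esym_inv_gf_ge1.
have n1_pos := INR_succ_gt0 n.
have -> : esym_inv n.+1 m.+1 * t ^ m.+1 =
    esym_inv n m.+1 * t ^ m.+1 + esym_inv n m * t ^ m * (t / INR n.+1).
  by rewrite esym_invSS -tech_pow_Rmult; field; lra.
rewrite esym_inv_gfS Rmult_plus_distr_l Rmult_1_r.
apply: Rplus_le_compat; first exact: IH.
by apply: Rmult_le_compat_r; [exact: Rdiv_le_0_compat | exact: IH].
Qed.

Lemma esym_inv_gf_fact_le t n : 0 <= t -> esym_inv_gf t n * INR n`! <= (INR n + t) ^ n.
Proof.
move=> t_ge0; elim: n => [|n IH]; first by rewrite /=; lra.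
have n1_pos := INR_succ_gt0 n.
have -> : esym_inv_gf t n.+1 * INR n.+1`! = esym_inv_gf t n * INR n`! * (INR n.+1 + t).
  by rewrite esym_inv_gfS factS mult_INR; field; lra.
rewrite -tech_pow_Rmult Rmult_comm; apply: Rmult_le_compat_l; first lra.
apply: (Rle_trans _ _ _ IH); apply: pow_incr; rewrite S_INR; have := pos_INR n; lra.
Qed.

Lemma succ_pow_le_exp n : INR n.+1 ^ n <= exp 1 * INR n ^ n.
Proof.
case: n => [|n]; first by have := exp_ineq1_le 1; rewrite /=; lra.
have n1_pos := INR_succ_gt0 n.
have -> : INR n.+2 = INR n.+1 * (1 + / INR n.+1) by rewrite (S_INR n.+1); field; lra.
rewrite Rpow_mult_distr Rmult_comm; apply: Rmult_le_compat_r; first exact/pow_le/Rlt_le.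
have -> : exp 1 = exp (/ INR n.+1) ^ n.+1 by rewrite -exp_INR_mul Rinv_r //; lra.
by apply: pow_incr; have := exp_ineq1_le (/ INR n.+1); have := Rinv_0_lt_compat _ n1_pos; lra.
Qed.

Lemma pow_le_exp_fact n : INR n ^ n <= exp 1 ^ n * INR n`!.
Proof.
elim: n => [|n IH]; first by rewrite /=; lra.
have n1_pos := INR_succ_gt0 n.
rewrite factS mult_INR -!tech_pow_Rmult.
have -> : exp 1 * exp 1 ^ n * (INR n.+1 * INR n`!) =
    INR n.+1 * (exp 1 * (exp 1 ^ n * INR n`!)) by ring.
apply: Rmult_le_compat_l; first lra.
apply: (Rle_trans _ _ _ (succ_pow_le_exp n)); apply: Rmult_le_compat_l => //.
exact/Rlt_le/exp_pos.
Qed.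

Lemma esym_inv_gf_le t m : 0 <= t <= INR m -> esym_inv_gf t m <= (2 * exp 1) ^ m.
Proof.
move=> [t_ge0 t_le_m]; have fact_pos := INR_fact_gt0 m.
apply: (Rmult_le_reg_r (INR m`!)) => //.
apply: (Rle_trans _ _ _ (esym_inv_gf_fact_le t m t_ge0)).
apply: (Rle_trans _ ((2 * INR m) ^ m)); first by apply: pow_incr; lra.
rewrite !Rpow_mult_distr Rmult_assoc; apply: Rmult_le_compat_l.
  exact/pow_le/Rlt_le/Rlt_0_2.
exact: pow_le_exp_fact.
Qed.

Lemma esym_inv_gf_tail t m n : 0 <= t -> (m <= n)%nat ->
  esym_inv_gf t n <= esym_inv_gf t m * exp (t * (harmonic n - harmonic m)).
Proof.
move=> t_ge0 le_mn; rewrite -(subnKC le_mn); elim: (n - m)%nat => [|d IH].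
  by rewrite addn0 Rminus_diag Rmult_0_r exp_0 Rmult_1_r; lra.
have md1_pos := INR_succ_gt0 (m + d).
rewrite addnS esym_inv_gfS harmonicS.
have -> : t * (harmonic (m + d) + / INR (m + d).+1 - harmonic m) =
    t * (harmonic (m + d) - harmonic m) + t / INR (m + d).+1 by rewrite /Rdiv; ring.
rewrite exp_plus -Rmult_assoc; apply: Rmult_le_compat => //.
- by have := esym_inv_gf_ge1 t (m + d) t_ge0; lra.
- by have := Rdiv_le_0_compat _ _ t_ge0 md1_pos; lra.
- exact: exp_ineq1_le.
Qed.

Lemma esym_inv_upper_bound m n : (0 < m)%nat -> (m <= n)%nat ->
  esym_inv n m <= (2 * exp 1 ^ 2 / INR m * Rmax 1 (ln (INR n / INR m))) ^ m.
Proof.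
move=> m_gt0 le_mn; have m_pos := INR_gt0 m_gt0.
set L := Rmax 1 _; have L_ge1 : 1 <= L by apply: Rmax_l.
have lnL : ln (INR n / INR m) <= L by apply: Rmax_r.
set t := INR m / L; have t_pos : 0 < t by apply: Rdiv_lt_0_compat; lra.
have tL : t * L = INR m by rewrite /t; field; lra.
have t_le_m : t <= INR m by nra.
have tail : exp (t * (harmonic n - harmonic m)) <= exp 1 ^ m.
  rewrite -exp_INR_mul Rmult_1_r; apply: exp_le_exp; rewrite -tL.
  apply: Rmult_le_compat_l; first lra.
  exact: Rle_trans (harmonic_sub_le_ln _ _ m_gt0 le_mn) lnL.
have bound : esym_inv n m * t ^ m <= (2 * exp 1 ^ 2) ^ m.
  apply: (Rle_trans _ _ _ (esym_inv_pow_le_gf _ _ _ (Rlt_le _ _ t_pos))).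
  apply: (Rle_trans _ _ _ (esym_inv_gf_tail _ _ _ (Rlt_le _ _ t_pos) le_mn)).
  have -> : (2 * exp 1 ^ 2) ^ m = (2 * exp 1) ^ m * exp 1 ^ m.
    by rewrite -Rpow_mult_distr; congr (_ ^ _); ring.
  apply: Rmult_le_compat; [| exact/Rlt_le/exp_pos | | exact: tail].
  - by have := esym_inv_gf_ge1 t m (Rlt_le _ _ t_pos); lra.
  - by apply: esym_inv_gf_le; lra.
have -> : 2 * exp 1 ^ 2 / INR m * L = 2 * exp 1 ^ 2 / t by rewrite /t; field; lra.
rewrite /Rdiv Rpow_mult_distr pow_inv.
by apply/Rle_div_r; first exact: pow_lt.
Qed.

Lemma esym_inv_block a b j : (a <= b)%nat ->
  esym_inv a j * (harmonic b - harmonic a) <= esym_inv b j.+1.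
Proof.
move=> le_ab; rewrite -(subnKC le_ab); elim: (b - a)%nat => [|d IH].
  by rewrite addn0 Rminus_diag Rmult_0_r; apply: esym_inv_ge0.
have c_pos := INR_succ_gt0 (a + d).
have mono : esym_inv a j / INR (a + d).+1 <= esym_inv (a + d) j / INR (a + d).+1.
  by apply/Rmult_le_compat_r/esym_inv_homo/leq_addr; exact/Rlt_le/Rinv_0_lt_compat.
rewrite addnS harmonicS esym_invSS.
have -> : esym_inv a j * (harmonic (a + d) + / INR (a + d).+1 - harmonic a) =
    esym_inv a j * (harmonic (a + d) - harmonic a) + esym_inv a j / INR (a + d).+1.
  by rewrite /Rdiv; ring.
lra.
Qed.

Lemma esym_inv_lower_step m a j L : (0 < m)%nat -> (m <= a)%nat -> 2 <= L ->
  exists b, (a <= b)%nat /\ INR b <= INR a * exp (L / INR m) /\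
    esym_inv a j * (L / (2 * INR m)) <= esym_inv b j.+1.
Proof.
move=> m_gt0 le_ma L_ge2.
have m_pos := INR_gt0 m_gt0; have a_pos := INR_gt0 (leq_trans m_gt0 le_ma).
have a1_pos := INR_succ_gt0 a.
have Lm_ge0 := Rdiv_le_0_compat L _ ltac:(lra) m_pos.
have r_ge1 : 1 <= exp (L / INR m) by have := exp_ineq1_le (L / INR m); lra.
(* b = a + floor (a (r - 1)) with r = exp (L/m): then ln ((b+1)/(a+1)) >= L/m - 1/a. *)
have [w [w_le w_gt]] := nfloor_ex (INR a * (exp (L / INR m) - 1)) ltac:(nra).
exists (a + w)%nat; rewrite plus_INR; split; first exact: leq_addr.
split; first lra.
apply: (Rle_trans _ _ _ _ (esym_inv_block _ _ j (leq_addr w a))).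
apply: Rmult_le_compat_l; first exact: esym_inv_ge0.
apply: (Rle_trans _ _ _ _ (ln_le_harmonic_sub _ _ (leq_addr w a))).
have : ln (INR a * exp (L / INR m) / INR a.+1) <= ln (INR (a + w).+1 / INR a.+1).
  apply: ln_le; first by apply: Rdiv_lt_0_compat; nra.
  by apply: Rmult_le_compat_r; [exact/Rlt_le/Rinv_0_lt_compat | rewrite S_INR plus_INR; lra].
rewrite ln_div; [|nra|done]; rewrite ln_mult ?ln_exp; [|done|exact: exp_pos].
have := ln_succ_sub_le a (leq_trans m_gt0 le_ma).
have : / INR a <= / INR m by apply: Rinv_le_contravar => //; apply/le_INR/leP.
have : / INR m <= L / (2 * INR m).
  by apply/Rle_div_r; [lra | have -> : / INR m * (2 * INR m) = 2 by field; lra].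
have -> : L / INR m = L / (2 * INR m) + L / (2 * INR m) by field; lra.
lra.
Qed.

Lemma esym_inv_lower_chain m L j : (0 < m)%nat -> 2 <= L ->
  exists a, (m <= a)%nat /\ INR a <= INR m * exp (INR j * (L / INR m)) /\
    (L / (2 * INR m)) ^ j <= esym_inv a j.
Proof.
move=> m_gt0 L_ge2; elim: j => [|j [a [le_ma [a_le e_ge]]]].
  by exists m; rewrite INR_0 Rmult_0_l exp_0 esym_inv_n0 pow_O; split=> //; lra.
have [b [le_ab [b_le e_step]]] := esym_inv_lower_step _ _ j _ m_gt0 le_ma L_ge2.
exists b; split; first exact: leq_trans le_ma le_ab.
split.
  rewrite S_INR Rmult_plus_distr_r Rmult_1_l exp_plus -Rmult_assoc.
  by apply: (Rle_trans _ _ _ b_le); apply: Rmult_le_compat_r => //; exact/Rlt_le/exp_pos.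
rewrite -tech_pow_Rmult Rmult_comm; apply: (Rle_trans _ _ _ _ e_step).
apply: Rmult_le_compat_r => //.
by apply: Rdiv_le_0_compat; [lra | have := INR_gt0 m_gt0; lra].
Qed.

Lemma esym_inv_lower_bound m n : (0 < m)%nat -> (m <= n)%nat ->
  (1 / 2 / INR m * Rmax 1 (ln (INR n / INR m))) ^ m <= esym_inv n m.
Proof.
move=> m_gt0 le_mn; have m_pos := INR_gt0 m_gt0.
have n_pos := INR_gt0 (leq_trans m_gt0 le_mn).
case: (Rle_lt_dec 2 (ln (INR n / INR m))) => [L_ge2 | L_lt2].
  rewrite Rmax_right; last lra.
  have [a [le_ma [a_le e_ge]]] := esym_inv_lower_chain _ _ m m_gt0 L_ge2.
  have le_an : (a <= n)%nat.
    apply/leP/INR_le; apply: (Rle_trans _ _ _ a_le).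
    have -> : INR m * (ln (INR n / INR m) / INR m) = ln (INR n / INR m) by field; lra.
    rewrite exp_ln; last exact: Rdiv_lt_0_compat.
    by apply: Req_le; field; lra.
  apply: (Rle_trans _ _ _ _ (esym_inv_homo m _ _ le_an)).
  have -> : 1 / 2 / INR m * ln (INR n / INR m) = ln (INR n / INR m) / (2 * INR m).
    by field; lra.
  exact: e_ge.
apply: (Rle_trans _ _ _ _ (esym_inv_homo m _ _ le_mn)).
apply: (Rle_trans _ _ _ _ (inv_pow_le_esym_inv_diag _ m_gt0)).
apply: pow_incr; have := Rmax_l 1 (ln (INR n / INR m)).
have : Rmax 1 (ln (INR n / INR m)) <= 2 by apply: Rmax_lub; lra.
have := Rinv_0_lt_compat _ m_pos; rewrite /Rdiv Rmult_1_l; nra.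
Qed.

Theorem lemma4 :
  exists c C : R, 0 < c /\ c <= C /\
    forall m n : nat, (1 <= m)%nat -> (m <= n)%nat ->
      INR (n`!) * (c / INR m * Rmax 1 (ln (INR n / INR m))) ^ m
        <= abs_stirling1R n.+1 m.+1
      /\ abs_stirling1R n.+1 m.+1
        <= INR (n`!) * (C / INR m * Rmax 1 (ln (INR n / INR m))) ^ m.
Proof.
exists (1 / 2), (2 * exp 1 ^ 2).
have e_ge2 : 2 <= exp 1 by have := exp_ineq1_le 1; lra.
split; first lra.
split; first nra.
move=> m n m_gt0 le_mn.
rewrite abs_stirling1R_ustirling1 ustirling1_esym_inv.
split; apply: Rmult_le_compat_l; try exact: pos_INR.
  exact: esym_inv_lower_bound.
exact: esym_inv_upper_bound.
Qed.
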